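(* Let $\mathcal P$ be a stationary Poisson point process of unit intensity on $\mathbb{R}^d$ and let $(A_n)_{n\ge1}$ be a sequence in $\mathfrak A$ with $A_n\to\mathbb{R}^d$. Let $\mathcal D_n=\mathcal D(\mathcal P\cap A_n)$ and $\mathring{\mathcal D}_n=\mathcal D((\mathcal P\cap A_n)\cup\{\mathbf 0\})$. Then there exist almost surely finite random variables $L,M$ and (random) simplices $\sigma_1,\dots,\sigma_L$ such that for all $n>M$, \[ \mathcal D_n\,\triangle\,\mathring{\mathcal D}_n=\{\sigma_1,\dots,\sigma_L\},\] and moreover $w(\sigma_i)\le M$ for all $i\le L$.
   Context: $W_m=\left[-\tfrac{m^{1/d}}{2},\tfrac{m^{1/d}}{2}\right]^d$; $\mathfrak A$ is the collection of sets $W_m+x$, $m\ge1$, $x\in\mathbb{R}^d$; $A_n\to\mathbb{R}^d$ means $\bigcup_{n}\bigcap_{m\ge n}A_m=\mathbb{R}^d$. For a finite set $\mathcal X\subset\mathbb{R}^d$ in general position, $\mathrm{Vor}_{\mathcal X}(x)=\{y:|y-x|\le|y-x'|\ \forall x'\in\mathcal X\}$, the Delaunay complex $\mathcal D(\mathcal X)$ consists of all $[x_0,\dots,x_k]$ with $\bigcap_i\mathrm{Vor}_{\mathcal X}(x_i)\ne\emptyset$, with weight $w([x_0,\dots,x_k])=\inf\{s:\bigcap_i(B_s(x_i)\cap\mathrm{Vor}_{\mathcal X}(x_i))\ne\emptyset\}$ (here computed in whichever of the two complexes contains the simplex). $\triangle$ denotes symmetric difference of sets of simplices. *)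

From HB Require Import structures.
From mathcomp Require Import all_boot all_order all_algebra.
From mathcomp Require Import all_classical all_reals all_analysis.
Set Implicit Arguments. Unset Strict Implicit. Unset Printing Implicit Defensive.
Import Order.TTheory GRing.Theory Num.Theory.
Local Open Scope classical_set_scope.
Local Open Scope ring_scope.

Section Geometry.
Variables (R : realType) (d : nat).
Notation V := 'rV[R]_d.

Definition edist (x y : V) : R :=
  Num.sqrt (\sum_(i < d) (x ord0 i - y ord0 i) ^+ 2).

Definition Vor (X : set V) (x : V) : set V :=
  [set y | forall x', X x' -> edist y x <= edist y x'].

Definition Delaunay (X : set V) : set (set V) :=
  [set S | [/\ S `<=` X, S !=set0, finite_set S &
            exists y, forall x, S x -> Vor X x y]].

Definition weight (X : set V) (S : set V) : R :=
  inf [set s : R | exists y, forall x, S x -> edist y x <= s /\ Vor X x y].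

Definition symdiff (D1 D2 : set (set V)) : set (set V) :=
  (D1 `\` D2) `|` (D2 `\` D1).

(* W_m + x, with W_m = [-m^{1/d}/2, m^{1/d}/2]^d *)
Definition Wbox (m : R) (x : V) : set V :=
  [set y | forall i : 'I_d,
     - (m `^ (d%:R)^-1) / 2 <= y ord0 i - x ord0 i <= (m `^ (d%:R)^-1) / 2].

Definition in_frakA (A : set V) : Prop :=
  exists (m : R) (x : V), 1 <= m /\ A = Wbox m x.

Definition tends_to_space (A : nat -> set V) : Prop :=
  \bigcup_n \bigcap_(m in [set m | (n <= m)%N]) A m = setT.

Definition hbox (a b : V) : set V :=
  [set y | forall i : 'I_d, a ord0 i <= y ord0 i < b ord0 i].
Definition hbox_vol (a b : V) : R := \prod_(i < d) (b ord0 i - a ord0 i).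

Definition has_card (A : set V) (k : nat) : Prop :=
  exists s : seq V, [/\ uniq s, [set x | x \in s] = A & size s = k].

End Geometry.

(* Pi : Omega -> set R^d is a (simple) Poisson point process of unit
   intensity on R^d under P: for every finite family of pairwise disjoint
   bounded half-open boxes B_1..B_k and counts n_1..n_k, the event
   {#(Pi cap B_j) = n_j for all j} is measurable and has probability
   prod_j exp(-vol B_j) vol(B_j)^{n_j} / n_j!
   (independent Poisson(Lebesgue) counts on disjoint boxes). *)
Definition unit_poisson_process (R : realType) (d : nat)
  (d0 : measure_display) (Omega : measurableType d0)
  (P : probability Omega R) (Pi : Omega -> set 'rV[R]_d) : Prop :=
  forall (k : nat) (a b : 'I_k -> 'rV[R]_d) (n : 'I_k -> nat),
    (forall j i, a j ord0 i <= b j ord0 i) ->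
    (forall j j', j != j' -> hbox (a j) (b j) `&` hbox (a j') (b j') = set0) ->
    let E := [set w | forall j, has_card (Pi w `&` hbox (a j) (b j)) (n j)] in
    measurable E /\
    P E = (\prod_(j < k)
             (expR (- hbox_vol (a j) (b j)) * hbox_vol (a j) (b j) ^+ n j
              / (n j)`!%:R))%:E.

From Pilot Require Import Defs.
From HB Require Import structures.
From mathcomp Require Import all_boot all_order all_algebra finmap.
From mathcomp Require Import all_classical all_reals all_analysis.
From mathcomp Require Import ring lra.
Import Order.TTheory GRing.Theory Num.Theory.
Local Open Scope classical_set_scope.
Local Open Scope ring_scope.

Set Implicit Arguments. Unset Strict Implicit. Unset Printing Implicit Defensive.

(* Almost surely the process has, at every scale, a point in each of [2 d] boxes placed far
   out along the coordinate axes; such points confine every Voronoi cell meeting a given cube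
   to a larger bounded cube.  It also has finitely many points in every cube.  Adding the
   origin only creates or destroys Delaunay simplices with a witness near the origin, so the
   symmetric difference, and the weights of its simplices, are decided by the points in one
   fixed cube.  Once [A n] contains that cube, the symmetric difference is therefore a fixed
   finite family of simplices with bounded weights. *)

Lemma setI_eq_mem (T : Type) (A B C : set T) x : A `&` C = B `&` C -> A x -> C x -> B x.
Proof. by move=> AB Ax Cx; have : (A `&` C) x by []; rewrite AB => -[]. Qed.

Lemma coord_gap_le (R : realFieldType) (t K0 c L y p f e : R) :
  `|y| <= t -> `|p| <= K0 -> `|f| <= c -> `|f - e| <= L / 2 ->
  (y - f) ^+ 2 - (y - p) ^+ 2 <= c ^+ 2 + 2 * t * K0 + t * L - 2 * (y * e).
Proof.
move=> yt pK0 fc fe.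
have f2 : f ^+ 2 <= c ^+ 2.
  by rewrite -real_normK ?num_real // ler_sqr ?nnegrE // (le_trans _ fc).
have yp : y * p <= t * K0.
  by apply: le_trans (ler_norm _) _; rewrite normrM ler_pM.
have yfe : - (y * (f - e)) <= t * (L / 2).
  by rewrite -mulrN; apply: le_trans (ler_norm _) _; rewrite normrM normrN ler_pM.
have p2 : 0 <= p ^+ 2 by exact: sqr_ge0.
have -> : (y - f) ^+ 2 - (y - p) ^+ 2 =
    f ^+ 2 - p ^+ 2 - 2 * (y * e) - 2 * (y * (f - e)) + 2 * (y * p) by ring.
lra.
Qed.

Lemma expRN_le_inv_nat (R : realType) (v : R) (n : nat) :
  n%:R <= v -> expR (- v) <= n.+1%:R^-1.
Proof.
move=> nv; rewrite expRN lef_pV2 ?posrE ?expR_gt0 ?ltr0n //.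
by apply: le_trans (expR_ge1Dx v); rewrite -natr1 addrC lerD2l.
Qed.

Lemma finite_subsets (T : choiceType) (F : set T) :
  finite_set F -> finite_set [set S | S `<=` F].
Proof.
move=> /finite_fsetP[X ->].
apply: (@sub_finite_set _ _ ((fun Y : {fset T} => [set` Y]) @` [set` fpowerset X]));
  last exact/finite_image/finite_fset.
move=> S SX; exists [fset x in X | `[< S x >]]%fset.
  by rewrite /= fpowersetE; apply/fsubsetP => x; rewrite !inE => /andP[].
apply/seteqP; split => x /=; first by rewrite !inE => /andP[_ /asboolP].
by move=> Sx; rewrite !inE (SX x Sx); apply/asboolP.
Qed.

Lemma finite_set_enum (T : pointedType) (A : set T) :
  finite_set A -> exists (n : nat) (f : nat -> T), A = f @` `I_n.
Proof.
move=> /finite_setP[n /card_esym /pcard_eqP[f]].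
by exists n, f; apply/esym/surj_image_eq; [exact/image_subP/funS|exact: surj].
Qed.

Section Geometry.
Variables (R : realType) (d : nat).
Notation V := 'rV[R]_d.
Implicit Types (x y z p f : V) (X S F Q : set V).

Definition sqdist (y x : V) : R := \sum_(i < d) (y ord0 i - x ord0 i) ^+ 2.

Lemma sqdist_ge0 y x : 0 <= sqdist y x.
Proof. by apply: sumr_ge0 => i _; exact: sqr_ge0. Qed.

Lemma ler_edist y x x' : (Defs.edist y x <= Defs.edist y x') = (sqdist y x <= sqdist y x').
Proof. by rewrite /Defs.edist ler_sqrt // sqdist_ge0. Qed.

Lemma edist_le (s : R) y x : 0 <= s -> sqdist y x <= s ^+ 2 -> Defs.edist y x <= s.
Proof.
move=> s0 h; rewrite /Defs.edist -(ger0_norm s0) -sqrtr_sqr ler_sqrt //.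
exact: sqr_ge0.
Qed.

Lemma coord_dist_le (s : R) y x i : 0 <= s -> sqdist y x <= s ^+ 2 ->
  `|y ord0 i - x ord0 i| <= s.
Proof.
move=> s0 h; have : (y ord0 i - x ord0 i) ^+ 2 <= s ^+ 2.
  apply: le_trans h; rewrite /sqdist (bigD1 i) //= lerDl.
  by apply: sumr_ge0 => j _; exact: sqr_ge0.
by rewrite -real_normK ?num_real // ler_sqr ?nnegrE.
Qed.

Definition cube (c : R) : set V := [set z | forall i, `|z ord0 i| <= c].

Lemma cubeS (a b : R) : a <= b -> cube a `<=` cube b.
Proof. by move=> ab z h i; exact: le_trans (h i) ab. Qed.

Lemma cube0 (a : R) : 0 <= a -> cube a 0.
Proof. by move=> a0 i; rewrite mxE normr0. Qed.

Lemma cube_sqdist (a s : R) y x : cube a y -> 0 <= s -> sqdist y x <= s ^+ 2 ->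
  cube (a + s) x.
Proof.
move=> ya s0 h i; rewrite -[x ord0 i](subKr (y ord0 i)).
by apply: le_trans (ler_normB _ _) _; apply: lerD; [exact: ya|exact: coord_dist_le].
Qed.

Lemma sqdist_cube (a b : R) y x : cube a y -> cube b x -> 0 <= a -> 0 <= b ->
  sqdist y x <= (d%:R * (a + b)) ^+ 2.
Proof.
move=> ya xb a0 b0; have ab0 : 0 <= a + b by rewrite addr_ge0.
apply: (@le_trans _ _ (\sum_(i < d) (a + b) ^+ 2)).
  apply: ler_sum => i _; rewrite -real_normK ?num_real // ler_sqr ?nnegrE //.
  by apply: le_trans (ler_normB _ _) _; exact: lerD.
rewrite sumr_const card_ord -[_ *+ d]mulr_natl [X in _ <= X]exprMn.
apply: ler_wpM2r; first exact: sqr_ge0.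
by rewrite -natrX ler_nat; case: (d) => // n; rewrite expnS leq_pmulr.
Qed.

Definition sqVor X x : set V := [set y | forall x', X x' -> sqdist y x <= sqdist y x'].

Lemma VorE X x y : Vor X x y <-> sqVor X x y.
Proof. by split => h x' /h; rewrite ler_edist. Qed.

Lemma DelaunayE X S : Delaunay X S <->
  [/\ S `<=` X, S !=set0, finite_set S & exists y, forall x, S x -> sqVor X x y].
Proof.
by split => -[SX Sn Sf [y hy]]; split => //; exists y => x /hy /VorE.
Qed.

(* A point of [X'] strictly nearer to [y] than [x] lies in [cube (a + s)],
   where [X] and [X'] agree. *)
Lemma sqVor_local X X' (K a s : R) x y : X `&` cube K = X' `&` cube K ->
  cube a y -> 0 <= s -> sqdist y x <= s ^+ 2 -> a + s <= K ->
  sqVor X x y -> sqVor X' x y.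
Proof.
move=> XX' ya s0 yx aK yX x' X'x'; rewrite leNgt; apply/negP => x'_near.
have Kx' : cube K x'.
  by apply: cubeS aK _ _; apply: cube_sqdist ya s0 _; exact: le_trans (ltW x'_near) yx.
have : (X `&` cube K) x' by rewrite XX'.
by case=> /yX; rewrite leNgt x'_near.
Qed.

Lemma weight_le X S y (s : R) : S !=set0 -> 0 <= s ->
  (forall x, S x -> sqdist y x <= s ^+ 2 /\ sqVor X x y) -> weight X S <= s.
Proof.
move=> [x0 Sx0] s0 h; apply: ge_inf.
  exists 0 => s' [y' hy']; have [+ _] := hy' x0 Sx0.
  exact: le_trans (sqrtr_ge0 _).
by exists y => x /h[yx /VorE]; split => //; exact: edist_le.
Qed.

Definition surrounds F (K0 r : R) := forall p y, cube K0 p ->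
  (forall f, F f -> sqdist y p <= sqdist y f) -> cube r y.

Definition shielded Q := forall K0 : R, 0 <= K0 -> exists (c r : R) f,
  [/\ 0 <= c, 0 <= r, Q f, cube c f & surrounds (Q `&` cube c) K0 r].

Definition locally_finite Q := forall K : R, finite_set (Q `&` cube K).

(* [Q_surr0] keeps the Voronoi cell of the origin inside [cube r0], which puts every simplex
   of the symmetric difference inside [cube K1]; [Q_surr1] then keeps all its witnesses inside
   [cube r1]. *)
Section Stabilization.
Variables (Q : set V) (c0 r0 c1 r1 K : R) (f0 f1 : V).
Let K1 := r0 + d%:R * (r0 + c0).
Hypotheses (c0_ge0 : 0 <= c0) (r0_ge0 : 0 <= r0) (c1_ge0 : 0 <= c1) (r1_ge0 : 0 <= r1).
Hypotheses (Qf0 : Q f0) (c0f0 : cube c0 f0) (Q_surr0 : surrounds (Q `&` cube c0) 0 r0).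
Hypotheses (Qf1 : Q f1) (c1f1 : cube c1 f1) (Q_surr1 : surrounds (Q `&` cube c1) K1 r1).
Hypotheses (K1K : K1 <= K) (K2K : r1 + d%:R * (r1 + c1) <= K).
Hypotheses (c0K : c0 <= K) (c1K : c1 <= K).
Let agrees X := X `&` cube K = Q `&` cube K.

Let dr0_ge0 : 0 <= d%:R * r0. Proof. by rewrite mulr_ge0 ?ler0n. Qed.
Let s0_ge0 : 0 <= d%:R * (r0 + c0). Proof. by rewrite mulr_ge0 ?ler0n ?addr_ge0. Qed.
Let s1_ge0 : 0 <= d%:R * (r1 + c1). Proof. by rewrite mulr_ge0 ?ler0n ?addr_ge0. Qed.
Let K0K : r0 + d%:R * r0 <= K.
Proof. by apply: le_trans K1K; rewrite lerD2l ler_wpM2l ?ler0n // lerDl. Qed.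

Lemma agrees_mem X (c : R) x : agrees X -> c <= K -> Q x -> cube c x -> X x.
Proof. by move=> XQ cK Qx /(cubeS cK); apply: setI_eq_mem (esym XQ) Qx. Qed.

Lemma Vor0_cube X y : agrees X ->
  (forall f, X f -> sqdist y 0 <= sqdist y f) -> cube r0 y.
Proof.
move=> XQ y0; apply: (Q_surr0 (cube0 (lexx 0))) => f [Qf c0f].
exact/y0/(agrees_mem XQ c0K).
Qed.

Lemma lost_simplex X S : agrees X ->
  Delaunay X S -> ~ Delaunay (X `|` [set 0]) S ->
  exists2 y, cube r0 y & forall x, S x ->
    [/\ sqdist y x <= (d%:R * (r0 + c0)) ^+ 2, sqVor X x y & cube K1 x].
Proof.
move=> XQ /DelaunayE[SX Sn Sf [y yS]] nDX0.
have [x1 Sx1 y0x1] : exists2 x1, S x1 & sqdist y 0 < sqdist y x1.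
  apply: contrapT => no_x1; apply: nDX0; apply/DelaunayE; split => //.
    by move=> x /SX; left.
  exists y => x Sx x' [/(yS x Sx)//|->]; rewrite leNgt; apply/negP => y0x.
  by apply: no_x1; exists x.
have y_r0 : cube r0 y.
  by apply: (Vor0_cube XQ) => f Xf; apply/ltW/(lt_le_trans y0x1)/yS.
exists y => // x Sx; have yx : sqdist y x <= (d%:R * (r0 + c0)) ^+ 2.
  apply: le_trans (yS x Sx f0 (agrees_mem XQ c0K Qf0 c0f0)) _.
  exact: sqdist_cube.
by split => //; [exact: yS | exact: cube_sqdist y_r0 s0_ge0 yx].
Qed.

Lemma new_simplex X S : agrees X ->
  Delaunay (X `|` [set 0]) S -> ~ Delaunay X S ->
  [/\ ~ X 0, S 0 & exists2 y, cube r0 y & forall x, S x ->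
    [/\ sqdist y x <= (d%:R * r0) ^+ 2, sqVor (X `|` [set 0]) x y
      & cube (r0 + d%:R * r0) x]].
Proof.
move=> XQ /DelaunayE[SX0 Sn Sf [y yS]] nDX.
have [S0 nX0] : S 0 /\ ~ X 0.
  apply: contrapT => h; apply: nDX; apply/DelaunayE; split => //; last first.
    by exists y => x Sx x' Xx'; apply: yS => //; left.
  move=> x Sx; have [//|x0] := SX0 x Sx.
  by rewrite x0 in Sx *; apply: contrapT => nX0; exact: h.
have y_r0 : cube r0 y by apply: (Vor0_cube XQ) => f Xf; apply: yS => //; left.
split => //; exists y => // x Sx.
have yx : sqdist y x <= (d%:R * r0) ^+ 2.
  apply: le_trans (yS x Sx 0 (or_intror erefl)) _.
  by have := sqdist_cube y_r0 (cube0 (lexx 0)) r0_ge0 (lexx 0); rewrite addr0.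
by split => //; [exact: yS | exact: cube_sqdist y_r0 dr0_ge0 yx].
Qed.

Lemma Vor0_bounded X S y : agrees X -> S !=set0 -> S `<=` cube K1 ->
  (forall x, S x -> sqVor (X `|` [set 0]) x y) ->
  cube r1 y /\ forall x, S x -> sqdist y x <= (d%:R * (r1 + c1)) ^+ 2.
Proof.
move=> XQ [x0 Sx0] SK1 yS.
have X0_c1 f : Q f -> cube c1 f -> (X `|` [set 0]) f.
  by move=> Qf c1f; left; exact: agrees_mem XQ c1K Qf c1f.
have y_r1 : cube r1 y.
  by apply: (Q_surr1 (SK1 x0 Sx0)) => f [Qf c1f]; exact/(yS x0 Sx0)/X0_c1.
split => // x Sx; apply: le_trans (yS x Sx f1 (X0_c1 f1 Qf1 c1f1)) _.
exact: sqdist_cube.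
Qed.

Lemma lost_simplex_agrees X X' S : agrees X -> agrees X' ->
  Delaunay X S -> ~ Delaunay (X `|` [set 0]) S ->
  Delaunay X' S /\ ~ Delaunay (X' `|` [set 0]) S.
Proof.
move=> XQ X'Q DX nDX0; have XX' : X `&` cube K = X' `&` cube K by rewrite XQ X'Q.
have [y y_r0 yS] := lost_simplex XQ DX nDX0; have [SX Sn Sf _] := DX.
have SK1 : S `<=` cube K1 by move=> x /yS[].
split.
  apply/DelaunayE; split => //.
    by move=> x Sx; exact: setI_eq_mem XX' (SX x Sx) (cubeS K1K (SK1 x Sx)).
  by exists y => x /yS[yx yX _]; exact: sqVor_local XX' y_r0 s0_ge0 yx K1K yX.
move=> /DelaunayE[_ _ _ [y' y'S]]; have [y'_r1 y'x] := Vor0_bounded X'Q Sn SK1 y'S.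
apply: nDX0; apply/DelaunayE; split => //; first by move=> x /SX; left.
exists y' => x Sx; apply: sqVor_local _ y'_r1 s1_ge0 (y'x x Sx) K2K (y'S x Sx).
by rewrite !setIUl XX'.
Qed.

Lemma new_simplex_agrees X X' S : agrees X -> agrees X' ->
  Delaunay (X `|` [set 0]) S -> ~ Delaunay X S ->
  Delaunay (X' `|` [set 0]) S /\ ~ Delaunay X' S.
Proof.
move=> XQ X'Q DX0 nDX; have XX' : X `&` cube K = X' `&` cube K by rewrite XQ X'Q.
have XX'0 : (X `|` [set 0]) `&` cube K = (X' `|` [set 0]) `&` cube K.
  by rewrite !setIUl XX'.
have [nX0 S0 [y y_r0 yS]] := new_simplex XQ DX0 nDX; have [SX0 Sn Sf _] := DX0.
split.
  apply/DelaunayE; split => //.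
    by move=> x Sx; have [_ _ /(cubeS K0K)] := yS x Sx; exact: setI_eq_mem XX'0 (SX0 x Sx).
  by exists y => x /yS[yx yX _]; exact: sqVor_local XX'0 y_r0 dr0_ge0 yx K0K yX.
move=> /DelaunayE[SX' _ _ _]; apply: nX0.
exact: setI_eq_mem (esym XX') (SX' 0 S0) (cube0 (le_trans c0_ge0 c0K)).
Qed.

Lemma symdiff_Delaunay_sub X X' : agrees X -> agrees X' ->
  symdiff (Delaunay X) (Delaunay (X `|` [set 0])) `<=`
  symdiff (Delaunay X') (Delaunay (X' `|` [set 0])).
Proof.
move=> XQ X'Q S [[DX nDX0]|[DX0 nDX]].
  by left; exact: lost_simplex_agrees XQ X'Q DX nDX0.
by right; exact: new_simplex_agrees XQ X'Q DX0 nDX.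
Qed.

Lemma symdiff_Delaunay_bounded X S : agrees X ->
  symdiff (Delaunay X) (Delaunay (X `|` [set 0])) S ->
  [/\ S `<=` (Q `&` cube K) `|` [set 0],
      Delaunay X S -> weight X S <= d%:R * (r0 + c0) &
      Delaunay (X `|` [set 0]) S -> weight (X `|` [set 0]) S <= d%:R * (r0 + c0)].
Proof.
move=> XQ [[DX nDX0]|[DX0 nDX]].
- have [y y_r0 yS] := lost_simplex XQ DX nDX0; have [SX Sn Sf _] := DX.
  split=> [x Sx|_|/nDX0//].
    have [_ _ /(cubeS K1K) Kx] := yS x Sx.
    by left; split => //; exact: setI_eq_mem XQ (SX x Sx) Kx.
  by apply: (weight_le (y := y) Sn s0_ge0) => x /yS[yx yX _].
- have [nX0 S0 [y y_r0 yS]] := new_simplex XQ DX0 nDX; have [SX0 Sn Sf _] := DX0.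
  split=> [x Sx|/nDX//|_].
    case: (SX0 x Sx) => [Xx|->]; last by right.
    have [_ _ /(cubeS K0K) Kx] := yS x Sx.
    by left; split => //; exact: setI_eq_mem XQ Xx Kx.
  apply: le_trans (weight_le (y := y) Sn dr0_ge0 _) _; first by move=> x /yS[yx yX _].
  by rewrite ler_wpM2l ?ler0n // lerDl.
Qed.

End Stabilization.

Lemma Delaunay_symdiff_stabilizes Q : shielded Q -> locally_finite Q ->
  exists (K M : R) (L : nat) (sigma : nat -> set V),
    forall X, X `&` cube K = Q `&` cube K ->
      symdiff (Delaunay X) (Delaunay (X `|` [set 0])) = sigma @` `I_L /\
      forall S, symdiff (Delaunay X) (Delaunay (X `|` [set 0])) S ->
        (Delaunay X S -> weight X S <= M) /\
        (Delaunay (X `|` [set 0]) S -> weight (X `|` [set 0]) S <= M).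
Proof.
move=> shQ finQ.
have [c0 [r0 [f0 [c0_ge0 r0_ge0 Qf0 c0f0 surr0]]]] := shQ 0 (lexx 0).
set K1 := r0 + d%:R * (r0 + c0).
have K1_ge0 : 0 <= K1 by rewrite addr_ge0 ?mulr_ge0 ?ler0n ?addr_ge0.
have [c1 [r1 [f1 [c1_ge0 r1_ge0 Qf1 c1f1 surr1]]]] := shQ K1 K1_ge0.
set K2 := r1 + d%:R * (r1 + c1).
have K2_ge0 : 0 <= K2 by rewrite addr_ge0 ?mulr_ge0 ?ler0n ?addr_ge0.
pose K := K1 + K2 + c0 + c1.
have [K1K K2K c0K c1K] : [/\ K1 <= K, K2 <= K, c0 <= K & c1 <= K].
  by rewrite /K; split; lra.
have sub := symdiff_Delaunay_sub c0_ge0 r0_ge0 c1_ge0 r1_ge0 Qf0 c0f0 surr0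
  Qf1 c1f1 surr1 K1K K2K c0K c1K.
have bnd := symdiff_Delaunay_bounded c0_ge0 r0_ge0 Qf0 c0f0 surr0 K1K c0K.
have QK : (Q `&` cube K) `&` cube K = Q `&` cube K by rewrite -setIA setIid.
pose T := symdiff (Delaunay (Q `&` cube K)) (Delaunay ((Q `&` cube K) `|` [set 0])).
have [L [sigma T_enum]] : exists L sigma, T = sigma @` `I_L.
  apply/finite_set_enum/(sub_finite_set (B := [set S | S `<=` (Q `&` cube K) `|` [set 0]])).
    by move=> S /(bnd _ _ QK)[].
  by apply/finite_subsets; rewrite finite_setU; split; [exact: finQ | exact: finite_set1].
exists K, (d%:R * (r0 + c0)), L, sigma => X XQ.
have XT : symdiff (Delaunay X) (Delaunay (X `|` [set 0])) = T.
  by apply/seteqP; split; apply: sub.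
by split => [|S /(bnd X S XQ)[]]; first by rewrite XT.
Qed.

Definition dir_center (i : 'I_d) (b : bool) (L : R) : V :=
  \row_j (if j == i then (if b then 1 else -1) * (2 * d%:R * L) else 0).

Definition dir_lo i b (L : R) : V := \row_j (dir_center i b L ord0 j - L / 2).
Definition dir_hi i b (L : R) : V := \row_j (dir_center i b L ord0 j + L / 2).
Definition dir_box i b (L : R) : set V := hbox (dir_lo i b L) (dir_hi i b L).

Lemma dir_lo_le_hi i b (L : R) j : 0 <= L -> dir_lo i b L ord0 j <= dir_hi i b L ord0 j.
Proof. by move=> L0; rewrite !mxE lerD2l; lra. Qed.

Lemma dir_box_vol i b (L : R) : hbox_vol (dir_lo i b L) (dir_hi i b L) = L ^+ d.
Proof.
rewrite /hbox_vol (eq_bigr (fun=> L)) ?prodr_const ?card_ord // => j _.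
by rewrite !mxE opprD addrACA subrr add0r opprK -splitr.
Qed.

Lemma dir_box_coord i b (L : R) f j : dir_box i b L f ->
  `|f ord0 j - dir_center i b L ord0 j| <= L / 2.
Proof.
move=> /(_ j); rewrite /dir_lo /dir_hi !mxE.
move: (if j == i then _ else _) => e /andP[lo hi].
by rewrite ler_norml; apply/andP; split; lra.
Qed.

Lemma dir_center_norm i b (L : R) j : 0 <= L ->
  `|dir_center i b L ord0 j| <= 2 * d%:R * L.
Proof.
move=> L0; have dL0 : 0 <= 2 * d%:R * L by rewrite !mulr_ge0 ?ler0n.
rewrite mxE; case: eqP => _; last by rewrite normr0.
by rewrite normrM (ger0_norm dL0); case: b; rewrite /= ?normrN normr1 mul1r.
Qed.

Lemma dir_box_cube i b (L B : R) f : 0 <= L -> L <= B -> dir_box i b L f ->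
  cube ((2 * d%:R + 1) * B) f.
Proof.
move=> L0 LB fL j; rewrite -[f ord0 j](subrK (dir_center i b L ord0 j)).
apply: le_trans (ler_normD _ _) _.
have := dir_box_coord j fL; have := dir_center_norm i b j L0.
have : 0 <= d%:R :> R by exact: ler0n.
move: (d%:R : R) => n n0 e_le fe_le.
have : (2 * n + 1) * L <= (2 * n + 1) * B by rewrite ler_wpM2l // addr_ge0 ?mulr_ge0.
nra.
Qed.

Lemma dir_center_dot y i b (L : R) :
  \sum_(j < d) y ord0 j * dir_center i b L ord0 j =
  y ord0 i * ((if b then 1 else -1) * (2 * d%:R * L)).
Proof.
rewrite (bigD1 i) //= big1 ?addr0; first by rewrite mxE eqxx.
by move=> j /negPf ji; rewrite mxE ji mulr0.
Qed.

(* The box point on [y]'s side of axis [i] has inner product about [2 d L |y_i|] with [y],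
   which beats the [d] coordinate errors of size [L |y_i|]. *)
Lemma sqdist_dir_box_gap (K0 c L : R) p y f i :
  (forall j, `|y ord0 j| <= `|y ord0 i|) -> cube K0 p -> cube c f ->
  dir_box i (0 <= y ord0 i) L f ->
  sqdist y f - sqdist y p <= d%:R * (c ^+ 2 + 2 * `|y ord0 i| * K0 - 3 * (`|y ord0 i| * L)).
Proof.
move=> i_max p_K0 f_c f_box; set t := `|y ord0 i|.
have -> : d%:R * (c ^+ 2 + 2 * t * K0 - 3 * (t * L)) =
    (c ^+ 2 + 2 * t * K0 + t * L) *+ d - 2 * (t * (2 * d%:R * L)).
  by rewrite -mulr_natl; ring.
have -> : t * (2 * d%:R * L) = \sum_(j < d) y ord0 j * dir_center i (0 <= y ord0 i) L ord0 j.
  rewrite dir_center_dot /t; case: (ltgtP (y ord0 i) 0) => [y0|y0|->].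
  - by rewrite ltr0_norm //; ring.
  - by rewrite gtr0_norm //; ring.
  - by rewrite normr0; ring.
rewrite /sqdist -sumrB; apply: le_trans (ler_sum _ (fun j _ => coord_gap_le
  (i_max j) (p_K0 j) (f_c j) (dir_box_coord j f_box))) _.
by rewrite sumrB sumr_const card_ord -mulr_sumr.
Qed.

(* Bound the largest coordinate [|y_i|] by comparing [p] with the box point on [y]'s side
   of axis [i]. *)
Lemma surrounds_dir_boxes Q (K0 B : R) (L : 'I_d -> bool -> R) (f : 'I_d -> bool -> V) :
  0 <= K0 -> (forall i b, K0 + 1 <= L i b <= B) ->
  (forall i b, Q (f i b) /\ dir_box i b (L i b) (f i b)) ->
  surrounds (Q `&` cube ((2 * d%:R + 1) * B)) K0 (((2 * d%:R + 1) * B) ^+ 2).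
Proof.
move=> K0_ge0 LB Qf p y p_K0 y_p j0; set c := (2 * d%:R + 1) * B.
have [i _ i_max] := @arg_maxP _ _ 'I_d j0 xpredT (fun j => `|y ord0 j|) erefl.
set b := 0 <= y ord0 i; have [/andP[K0L LB'] [Qfi fi_box]] := (LB i b, Qf i b).
have L0 : 0 <= L i b by apply: le_trans K0L; rewrite addr_ge0.
have fi_c : cube c (f i b) := dir_box_cube L0 LB' fi_box.
have gap := sqdist_dir_box_gap (fun j => i_max j erefl) p_K0 fi_c fi_box.
have d_gt0 : 0 < d%:R :> R by rewrite ltr0n; apply: leq_ltn_trans (ltn_ord j0).
set t := `|y ord0 i| in gap i_max *; set Li := L i b in K0L gap *.
have : 0 <= c ^+ 2 + 2 * t * K0 - 3 * (t * Li).
  rewrite -(pmulr_rge0 _ d_gt0); apply: le_trans gap; rewrite subr_ge0; exact: y_p.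
have : 0 <= t * (3 * Li - 2 * K0 - 1) by apply: mulr_ge0; [exact: normr_ge0 | lra].
move=> h1 h2; have : t <= c ^+ 2 by lra.
exact/le_trans/i_max.
Qed.

Lemma shielded_of_dir_boxes Q : (0 < d)%N ->
  (forall (k : nat) i b, exists (n : nat) f, Q f /\ dir_box i b (n + k).+1%:R f) ->
  shielded Q.
Proof.
move=> d_gt0 boxQ K0 K0_ge0; pose k := Num.Def.archi_bound K0.
have /choice[nf nfQ] : forall ib : 'I_d * bool, exists nf : nat * V,
    Q nf.2 /\ dir_box ib.1 ib.2 ((nf.1 + k).+1)%:R nf.2.
  by move=> [i b]; have [n [f ?]] := boxQ k i b; exists (n, f).
pose L i b : R := (((nf (i, b)).1 + k).+1)%:R.
pose B : R := (\max_(ib : 'I_d * bool) ((nf ib).1 + k).+1)%:R.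
have LB i b : K0 + 1 <= L i b <= B.
  rewrite ler_nat (@leq_bigmax _ (fun ib => ((nf ib).1 + k).+1) (i, b)) andbT.
  apply: le_trans (_ : k%:R + 1 <= _); first by rewrite lerD2r ltW // archi_boundP.
  by rewrite natr1 ler_nat ltnS leq_addl.
pose i0 := Ordinal d_gt0; set c := (2 * d%:R + 1) * B.
have [Qf0 f0_box] := nfQ (i0, true).
exists c, (c ^+ 2), (nf (i0, true)).2; split => //.
- by rewrite mulr_ge0 ?ler0n // addr_ge0 ?mulr_ge0 ?ler0n.
- exact: sqr_ge0.
- by have /andP[_ LB0] := LB i0 true; exact: dir_box_cube (ler0n _ _) LB0 f0_box.
- by apply: surrounds_dir_boxes K0_ge0 LB _ => i b; exact: nfQ (i, b).
Qed.

Lemma has_card0 X : has_card X 0 <-> X = set0.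
Proof.
split => [[s [_ <- /size0nil ->]]|->]; first by apply/seteqP; split => x.
by exists [::]; split => //; apply/seteqP; split => x.
Qed.

Lemma has_card_inj X (n m : nat) : has_card X n -> has_card X m -> n = m.
Proof.
move=> [s [s_uniq sX <-]] [s' [s'_uniq s'X <-]].
apply/perm_size/uniq_perm => // x; apply/idP/idP => xs.
- have : X x by rewrite -sX.
  by rewrite -s'X.
- have : X x by rewrite -s'X.
  by rewrite -sX.
Qed.

Lemma has_card_finite X (n : nat) : has_card X n -> finite_set X.
Proof. by move=> [s [_ <- _]]; exact: finite_seq. Qed.

Lemma cube_sub_hbox (K : R) (k : nat) : K < k%:R ->
  cube K `<=` hbox (const_mx (- k%:R)) (const_mx k%:R).
Proof.
move=> Kk z zK i; rewrite !mxE; have := zK i; rewrite ler_norml => /andP[z1 z2].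
by apply/andP; split; lra.
Qed.

Lemma cube_sub_Wbox (m K : R) (x : V) :
  Wbox m x (const_mx (- K)) -> Wbox m x (const_mx K) -> cube K `<=` Wbox m x.
Proof.
move=> lo hi z zK i; have := lo i; have := hi i; have := zK i.
rewrite !mxE ler_norml => /andP[z1 z2] /andP[h1 h2] /andP[l1 l2].
by apply/andP; split; lra.
Qed.

Lemma cube_sub_eventually (A : nat -> set V) (K : R) :
  (forall n, in_frakA (A n)) -> tends_to_space A ->
  exists N, forall n, (N <= n)%N -> cube K `<=` A n.
Proof.
move=> frakA AR.
have [na _ lo_in] : (\bigcup_n \bigcap_(m in [set m | (n <= m)%N]) A m) (const_mx (- K)).
  by rewrite AR.
have [nb _ hi_in] : (\bigcup_n \bigcap_(m in [set m | (n <= m)%N]) A m) (const_mx K).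
  by rewrite AR.
exists (maxn na nb) => n; rewrite geq_max => /andP[na_n nb_n].
move: (lo_in n na_n) (hi_in n nb_n); have [m [x [_ ->]]] := frakA n.
exact: cube_sub_Wbox.
Qed.

End Geometry.

Section PoissonProcess.
Import numFieldNormedType.Exports.
Variables (R : realType) (d : nat) (d0 : measure_display) (Omega : measurableType d0).
Variables (P : probability Omega R) (Pi : Omega -> set 'rV[R]_d).
Hypothesis Pi_poisson : unit_poisson_process P Pi.

Lemma ae_of_le_cvg0 (Q : Omega -> Prop) (E : set Omega) (u : R^nat) :
  measurable E -> u @ \oo --> 0 -> (forall n, P E <= (u n)%:E)%E ->
  (forall w, ~ Q w -> E w) -> {ae P, forall w, Q w}.
Proof.
move=> mE u0 PEu nQE; exists E; split => //.
have PE_fin : P E \is a fin_num.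
  by rewrite ge0_fin_numE ?measure_ge0 // (le_lt_trans (PEu 0%N)) ?ltey.
rewrite -(fineK PE_fin); congr EFin; apply/eqP.
rewrite eq_le fine_ge0 ?measure_ge0 // andbT -(cvg_lim _ u0) //.
by apply: limr_ge; [exact: cvgP u0 | apply: nearW => n; rewrite -lee_fin fineK].
Qed.

Lemma poisson_box_count (a b : 'rV[R]_d) (n : nat) :
  (forall i, a ord0 i <= b ord0 i) ->
  measurable [set w | has_card (Pi w `&` hbox a b) n] /\
  P [set w | has_card (Pi w `&` hbox a b) n] =
    (expR (- hbox_vol a b) * hbox_vol a b ^+ n / n`!%:R)%:E.
Proof.
move=> ab; have := @Pi_poisson 1%N (fun=> a) (fun=> b) (fun=> n) (fun=> ab).
have disj (j j' : 'I_1) : j != j' -> hbox a b `&` hbox a b = set0.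
  by rewrite (ord1 j) (ord1 j') eqxx.
move=> /(_ disj) /=; rewrite big_ord1.
have -> // : [set w | forall j : 'I_1, has_card (Pi w `&` hbox a b) n] =
             [set w | has_card (Pi w `&` hbox a b) n].
by apply/seteqP; split => w /= h; [exact: h ord0 | move=> j].
Qed.

Lemma ae_some_box_occupied (a b : nat -> 'rV[R]_d) :
  (forall n i, a n ord0 i <= b n ord0 i) ->
  (forall n, n%:R <= hbox_vol (a n) (b n)) ->
  {ae P, forall w, exists n, Pi w `&` hbox (a n) (b n) !=set0}.
Proof.
move=> ab vol_n; pose E n := [set w | has_card (Pi w `&` hbox (a n) (b n)) 0].
have PE n := poisson_box_count 0 (ab n).
have mE : measurable (\bigcap_n E n) by apply: bigcapT_measurable => n; exact: (PE n).1.
apply: (ae_of_le_cvg0 mE cvg_harmonic).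
  move=> n; apply: (@le_trans _ _ (P (E n))).
    by apply: le_measure; rewrite ?inE //; [exact: (PE n).1 | move=> w /(_ n I)].
  rewrite (PE n).2 expr0 fact0 divr1 mulr1 lee_fin.
  exact: expRN_le_inv_nat.
move=> w none n _; apply/has_card0/seteqP; split => // f Pf.
by apply: none; exists n, f.
Qed.

Lemma ae_box_count_finite (a b : 'rV[R]_d) : (forall i, a ord0 i <= b ord0 i) ->
  {ae P, forall w, exists n, has_card (Pi w `&` hbox a b) n}.
Proof.
move=> ab; set v := hbox_vol a b.
pose E n := [set w | has_card (Pi w `&` hbox a b) n].
have PE n := poisson_box_count n ab.
pose U N := \big[setU/set0]_(n < N) E n.
have mU N : measurable (U N) by apply: bigsetU_measurable => n _; exact: (PE n).1.
have E_disj : trivIset setT E.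
  apply/trivIsetP => n m _ _ nm; apply/seteqP; split => // w [En Em].
  by move/eqP: nm; apply; exact: has_card_inj En Em.
have mE : measurable (\bigcap_N ~` U N).
  by apply: bigcapT_measurable => N; exact: measurableC.
pose u N := 1 - expR (- v) * series (exp_coeff v) N.
have u0 : u @ \oo --> 0.
  have -> : 0 = 1 - expR (- v) * expR v by rewrite expRN mulVf ?subrr ?gt_eqF ?expR_gt0.
  exact: cvgB (cvg_cst _) (cvgM (cvg_cst _) (is_cvg_series_exp_coeff v)).
apply: (ae_of_le_cvg0 mE u0).
  move=> N; apply: (@le_trans _ _ (P (~` U N))).
    by apply: le_measure; rewrite ?inE //; [exact: measurableC | move=> w /(_ N I)].
  rewrite probability_setC // measure_bigsetU //; last by move=> n; exact: (PE n).1.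
  rewrite (eq_bigr (fun n : 'I_N => (expR (- v) * exp_coeff v n)%:E)); last first.
    by move=> n _; apply: (etrans (PE n).2); rewrite /exp_coeff /= mulrA.
  by rewrite sumEFin /u /series /= big_mkord mulr_sumr.
move=> w nQ N _ /=; rewrite /U -bigcup_mkord => -[n _ En].
by apply: nQ; exists n.
Qed.

Lemma ae_shielded : (0 < d)%N -> {ae P, forall w, shielded (Pi w)}.
Proof.
move=> d_gt0; have boxes : {ae P, forall w, forall (k : nat) i b,
    exists (n : nat) f, Pi w f /\ dir_box i b (n + k).+1%:R f}.
  apply: ae_foralln => k; apply: filter_forall => i; apply: filter_forall => b.
  pose L n : R := (n + k).+1%:R.
  have lo_hi n j : dir_lo i b (L n) ord0 j <= dir_hi i b (L n) ord0 j.
    exact: dir_lo_le_hi (ler0n _ _).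
  have vol_ge n : n%:R <= hbox_vol (dir_lo i b (L n)) (dir_hi i b (L n)).
    rewrite dir_box_vol /L -natrX ler_nat.
    apply: leq_trans (leq_trans (leq_addr k n) (leqnSn _)) _.
    by case: (d) d_gt0 => // d' _; rewrite expnS leq_pmulr // expn_gt0.
  apply: filterS (ae_some_box_occupied lo_hi vol_ge) => w [n [f [Pf f_box]]].
  by exists n, f.
by apply: filterS boxes => w; exact: shielded_of_dir_boxes.
Qed.

Lemma ae_locally_finite : {ae P, forall w, locally_finite (Pi w)}.
Proof.
have : {ae P, forall w, forall k : nat, exists n,
    has_card (Pi w `&` hbox (const_mx (- k%:R)) (const_mx k%:R)) n}.
  apply: ae_foralln => k; apply: ae_box_count_finite => i.
  by rewrite !mxE; have := ler0n R k; lra.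
apply: filterS => w fin K; pose k := Num.Def.archi_bound `|K|.
have Kk : K < k%:R by apply: le_lt_trans (ler_norm K) (archi_boundP _).
have [n /has_card_finite fin_k] := fin k; apply: sub_finite_set fin_k.
exact: setIS (cube_sub_hbox Kk).
Qed.

End PoissonProcess.

Theorem proposition3p12 (R : realType) (d : nat) (hd : (0 < d)%N)
  (d0 : measure_display) (Omega : measurableType d0)
  (P : probability Omega R) (Pi : Omega -> set 'rV[R]_d)
  (A : nat -> set 'rV[R]_d) :
  unit_poisson_process P Pi ->
  (forall n, in_frakA (A n)) ->
  tends_to_space A ->
  {ae P, forall w, exists (L : nat) (M : R) (sigma : nat -> set 'rV[R]_d),
     forall n : nat, M < n%:R ->
       let X := Pi w `&` A n in
       let X0 := X `|` [set 0] in
       symdiff (Delaunay X) (Delaunay X0) = sigma @` [set i | (i < L)%N] /\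
       (forall i, (i < L)%N ->
          (Delaunay X (sigma i) -> weight X (sigma i) <= M) /\
          (Delaunay X0 (sigma i) -> weight X0 (sigma i) <= M))}.
Proof.
move=> Pi_poisson frakA AR.
apply: filterS2 (ae_shielded Pi_poisson hd) (ae_locally_finite Pi_poisson) => w shQ finQ.
have [K [M [L [sigma stable]]]] := Delaunay_symdiff_stabilizes shQ finQ.
have [N KA] := cube_sub_eventually K frakA AR.
exists L, (Num.max N%:R M), sigma => n; rewrite gt_max => /andP[Nn _].
have AnK : Pi w `&` A n `&` cube K = Pi w `&` cube K.
  by rewrite -setIA (setIidr (KA n _)) //; apply/ltnW; rewrite -(ltr_nat R).
have [-> weights] := stable _ AnK; split => // i iL.
have [wX wX0] := weights (sigma i) (ex_intro2 _ _ i iL erefl).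
have MM : M <= Num.max N%:R M by rewrite le_max lexx orbT.
by split => [/wX|/wX0] /le_trans; apply.
Qed.
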